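(* Let $R$ be a commutative ring with identity and $S$ a multiplicative subset of $R$. Then: (1) every absolutely pure $R$-module and every $u$-$S$-injective $R$-module is $u$-$S$-absolutely pure; (2) every finite direct sum of $u$-$S$-absolutely pure modules is $u$-$S$-absolutely pure; (3) if $0\rightarrow A\rightarrow B\rightarrow C\rightarrow 0$ is a short $u$-$S$-exact sequence with $A$ and $C$ $u$-$S$-absolutely pure, then $B$ is $u$-$S$-absolutely pure; (4) the class of $u$-$S$-absolutely pure modules is closed under $u$-$S$-isomorphisms, i.e. if there is a $u$-$S$-isomorphism $A\to B$ and $A$ is $u$-$S$-absolutely pure, then $B$ is $u$-$S$-absolutely pure; (5) if $0\rightarrow A\rightarrow B\rightarrow C\rightarrow 0$ is a $u$-$S$-pure short $u$-$S$-exact sequence and $B$ is $u$-$S$-absolutely pure, then $A$ is $u$-$S$-absolutely pure.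
   Context: A multiplicative subset $S$ satisfies $1\in S$ and is closed under products. An $R$-module $T$ is $u$-$S$-torsion if $sT=0$ for some $s\in S$. A short sequence $0\to A\xrightarrow{f}B\xrightarrow{g}C\to 0$ is $u$-$S$-exact if there is $s\in S$ with $s\,\mathrm{Ker}(f)=0$, $s\,\mathrm{Ker}(g)\subseteq\mathrm{Im}(f)$, $s\,\mathrm{Im}(f)\subseteq\mathrm{Ker}(g)$, $sC\subseteq\mathrm{Im}(g)$. A homomorphism $f:A\to B$ is a $u$-$S$-isomorphism if there is $s\in S$ with $s\,\mathrm{Ker}(f)=0$ and $sB\subseteq\mathrm{Im}(f)$. A short $u$-$S$-exact sequence is $u$-$S$-pure if tensoring it with any $R$-module $M$ gives a short $u$-$S$-exact sequence. An $R$-module $E$ is $u$-$S$-absolutely pure if every short $u$-$S$-exact sequence $0\to E\to B\to C\to 0$ beginning with $E$ is $u$-$S$-pure. $E$ is absolutely pure if it is a pure submodule of every module containing it (equivalently $\mathrm{Ext}^1_R(N,E)=0$ for all finitely presented $N$). $E$ is $u$-$S$-injective if $\mathrm{Hom}_R(-,E)$ sends short $u$-$S$-exact sequences to short $u$-$S$-exact sequences (equivalently $\mathrm{Ext}^1_R(M,E)$ is $u$-$S$-torsion for all $R$-modules $M$). *)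

From mathcomp Require Import all_boot all_algebra.
Set Implicit Arguments. Unset Strict Implicit. Unset Printing Implicit Defensive.
Import GRing.Theory.
Local Open Scope ring_scope.

Section UScomm.
Variable R : comPzRingType.

Definition mult_subset (S : R -> Prop) : Prop :=
  S 1 /\ (forall a b, S a -> S b -> S (a * b)).

Definition is_lin (U V : lmodType R) (f : U -> V) : Prop :=
  forall (k : R) (x y : U), f (k *: x + y) = k *: f x + f y.

Definition uS_exact (S : R -> Prop) (A B C : lmodType R)
    (f : {linear A -> B}) (g : {linear B -> C}) : Prop :=
  exists s, S s /\
    (forall a, f a = 0 -> s *: a = 0) /\
    (forall b, g b = 0 -> exists a, f a = s *: b) /\
    (forall a, g (s *: f a) = 0) /\
    (forall c, exists b, g b = s *: c).

Record tensor_product (M N : lmodType R) := TensorProduct {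
  tp_mod :> lmodType R;
  tp_map : M -> N -> tp_mod;
  tp_bilin : (forall m, is_lin (tp_map m)) /\ (forall n, is_lin (fun m => tp_map m n));
  tp_univ : forall (P : lmodType R) (b : M -> N -> P),
     (forall m, is_lin (b m)) -> (forall n, is_lin (fun m => b m n)) ->
     (exists f : {linear tp_mod -> P}, forall m n, f (tp_map m n) = b m n) /\
     (forall f g : {linear tp_mod -> P},
         (forall m n, f (tp_map m n) = b m n) ->
         (forall m n, g (tp_map m n) = b m n) -> f =1 g)
}.

(* phi is the map 1_M (x) f : M (x) A -> M (x) B (unique by the universal property) *)
Definition is_tensor_map (M A B : lmodType R) (f : A -> B)
    (TA : tensor_product M A) (TB : tensor_product M B) (phi : TA -> TB) : Prop :=
  forall m a, phi (tp_map TA m a) = tp_map TB m (f a).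

Definition uS_pure (S : R -> Prop) (A B C : lmodType R)
    (f : {linear A -> B}) (g : {linear B -> C}) : Prop :=
  uS_exact S f g /\
  forall (M : lmodType R) (TA : tensor_product M A) (TB : tensor_product M B)
         (TC : tensor_product M C)
         (phi : {linear TA -> TB}) (psi : {linear TB -> TC}),
    is_tensor_map f phi -> is_tensor_map g psi -> uS_exact S phi psi.

Definition uS_abs_pure (S : R -> Prop) (E : lmodType R) : Prop :=
  forall (B C : lmodType R) (f : {linear E -> B}) (g : {linear B -> C}),
    uS_exact S f g -> uS_pure S f g.

(* absolutely pure: pure submodule of every module containing it, i.e. for every
   injective linear i : E -> B and every M, 1_M (x) i is injective *)
Definition abs_pure (E : lmodType R) : Prop :=
  forall (B : lmodType R) (i : {linear E -> B}), injective i ->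
  forall (M : lmodType R) (TE : tensor_product M E) (TB : tensor_product M B)
         (phi : {linear TE -> TB}),
    is_tensor_map i phi -> injective phi.

(* u-S-injective: Hom_R(-,E) sends short u-S-exact sequences 0->A->B->C->0 to
   short u-S-exact sequences 0->Hom(C,E)->Hom(B,E)->Hom(A,E)->0 (maps are
   precomposition with g and f; equality in Hom is pointwise) *)
Definition uS_injective (S : R -> Prop) (E : lmodType R) : Prop :=
  forall (A B C : lmodType R) (f : {linear A -> B}) (g : {linear B -> C}),
    uS_exact S f g ->
    exists s, S s /\
      (forall h : {linear C -> E}, (forall b, h (g b) = 0) ->
          forall c, s *: h c = 0) /\
      (forall h : {linear B -> E}, (forall a, h (f a) = 0) ->
          exists k : {linear C -> E}, forall b, k (g b) = s *: h b) /\
      (forall (k : {linear C -> E}) a, s *: k (g (f a)) = 0) /\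
      (forall h : {linear A -> E},
          exists k : {linear B -> E}, forall a, k (f a) = s *: h a).

Definition uS_iso (S : R -> Prop) (A B : lmodType R) (f : {linear A -> B}) : Prop :=
  exists s, S s /\ (forall a, f a = 0 -> s *: a = 0) /\
                   (forall b, exists a, f a = s *: b).

Fixpoint dsum (M0 : lmodType R) (l : seq (lmodType R)) : lmodType R :=
  match l with
  | [::] => M0
  | M1 :: l' => ((M0 * dsum M1 l')%type : lmodType R)
  end.

End UScomm.

From HB Require Import structures.
From mathcomp Require Import all_boot all_algebra.
From mathcomp Require Import boolp ring.
Set Implicit Arguments. Unset Strict Implicit. Unset Printing Implicit Defensive.
Import GRing.Theory.
Local Open Scope ring_scope.

(* Call f : A -> B a u-S-monomorphism when s Ker f = 0 for some s in S.  Tensoring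
   is right exact up to scalars of S, so a short u-S-exact sequence starting with
   f is u-S-pure exactly when every 1_M (x) f is again a u-S-monomorphism; hence E
   is u-S-absolutely pure iff 1_M (x) f is a u-S-monomorphism for every
   u-S-monomorphism f out of E.  In this form (1) follows by tensoring the pushout
   of f along s.1_E (whose leg out of E is injective) or a u-S-retraction of f; (4) by composing
   with the u-S-surjection 1_M (x) f; (5) by tensoring the pushout of f along h;
   and (3) by comparing 1_M (x) h with 1_M (x) h', where h' : C -> D / h(f(A)) is
   induced by h.  (2) is (3) for split sequences. *)

Section LinearMaps.
Variables (R : comPzRingType) (U V : lmodType R).

Definition linmap (f : U -> V) (fL : is_lin f) : {linear U -> V} :=
  HB.pack f (GRing.isLinear.Build R U V *:%R f fL).

Lemma linear_is_lin (f : {linear U -> V}) : is_lin f.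
Proof. by move=> k x y; rewrite linearP. Qed.

Variables (f : U -> V) (fL : is_lin f).

Lemma is_linD x y : f (x + y) = f x + f y. Proof. exact: (linearD (linmap fL)). Qed.
Lemma is_linZ k x : f (k *: x) = k *: f x.
Proof. by rewrite -[f _]/(linmap fL (k *: x)) linearZ. Qed.
Lemma is_lin0 : f 0 = 0. Proof. exact: (linear0 (linmap fL)). Qed.

End LinearMaps.

(** * Quotient modules *)

Section Premodule.
Variable R : comPzRingType.

Record premodule := Premodule {
  pm_car : Type;
  pm_eqv : pm_car -> pm_car -> Prop;
  pm_add : pm_car -> pm_car -> pm_car;
  pm_opp : pm_car -> pm_car;
  pm_zero : pm_car;
  pm_scale : R -> pm_car -> pm_car;
  pm_refl : forall x, pm_eqv x x;
  pm_sym : forall x y, pm_eqv x y -> pm_eqv y x;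
  pm_trans : forall x y z, pm_eqv x y -> pm_eqv y z -> pm_eqv x z;
  pm_add_congr : forall x x' y y', pm_eqv x x' -> pm_eqv y y' ->
      pm_eqv (pm_add x y) (pm_add x' y');
  pm_opp_congr : forall x x', pm_eqv x x' -> pm_eqv (pm_opp x) (pm_opp x');
  pm_scale_congr : forall k x x', pm_eqv x x' -> pm_eqv (pm_scale k x) (pm_scale k x');
  pm_addA : forall x y z, pm_eqv (pm_add x (pm_add y z)) (pm_add (pm_add x y) z);
  pm_addC : forall x y, pm_eqv (pm_add x y) (pm_add y x);
  pm_add0 : forall x, pm_eqv (pm_add pm_zero x) x;
  pm_addN : forall x, pm_eqv (pm_add (pm_opp x) x) pm_zero;
  pm_scaleA : forall a b x, pm_eqv (pm_scale a (pm_scale b x)) (pm_scale (a * b) x);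
  pm_scale1 : forall x, pm_eqv (pm_scale 1 x) x;
  pm_scaleDr : forall a x y,
      pm_eqv (pm_scale a (pm_add x y)) (pm_add (pm_scale a x) (pm_scale a y));
  pm_scaleDl : forall a b x,
      pm_eqv (pm_scale (a + b) x) (pm_add (pm_scale a x) (pm_scale b x))
}.

Definition pquot_car (p : premodule) :=
  {C : pm_car p -> Prop | exists x, C = pm_eqv x}.

End Premodule.

HB.instance Definition _ (R : comPzRingType) (p : premodule R) :=
  gen_eqMixin (pquot_car p).
HB.instance Definition _ (R : comPzRingType) (p : premodule R) :=
  gen_choiceMixin (pquot_car p).

Section PquotZmod.
Variables (R : comPzRingType) (p : premodule R).
Local Notation X := (pm_car p).
Local Notation eqv := (@pm_eqv R p).

Definition pm_class (x : X) : pquot_car p := exist _ (eqv x) (ex_intro _ x erefl).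

Lemma pm_class_surj (q : pquot_car p) : exists x, q = pm_class x.
Proof.
case: q => C [x eC]; exists x; subst C.
by congr exist; apply: Prop_irrelevance.
Qed.

Lemma pm_class_eq x y : pm_class x = pm_class y <-> eqv x y.
Proof.
split=> [[->]|xy]; first exact: pm_refl.
have exy : eqv x = eqv y.
  apply: funext => z; apply: propext; split; apply: pm_trans => //.
  exact: pm_sym.
rewrite /pm_class; move: (ex_intro _ x _); rewrite exy => ex.
by congr exist; apply: Prop_irrelevance.
Qed.

Definition pm_repr (q : pquot_car p) : X := projT1 (cid (pm_class_surj q)).

Lemma pm_reprK q : pm_class (pm_repr q) = q.
Proof. by rewrite /pm_repr; case: cid. Qed.

Definition pquot_add a b := pm_class (pm_add (pm_repr a) (pm_repr b)).
Definition pquot_opp a := pm_class (pm_opp (pm_repr a)).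
Definition pquot_scale k a := pm_class (pm_scale k (pm_repr a)).

Lemma pm_repr_eqv x : eqv (pm_repr (pm_class x)) x.
Proof. by apply/pm_class_eq; rewrite pm_reprK. Qed.

Lemma pquot_addE x y : pquot_add (pm_class x) (pm_class y) = pm_class (pm_add x y).
Proof. by apply/pm_class_eq; apply: pm_add_congr; apply: pm_repr_eqv. Qed.

Lemma pquot_oppE x : pquot_opp (pm_class x) = pm_class (pm_opp x).
Proof. by apply/pm_class_eq; apply: pm_opp_congr; apply: pm_repr_eqv. Qed.

Lemma pquot_scaleE k x : pquot_scale k (pm_class x) = pm_class (pm_scale k x).
Proof. by apply/pm_class_eq; apply: pm_scale_congr; apply: pm_repr_eqv. Qed.

Lemma pquot_addA : associative pquot_add.
Proof.
move=> a b c; have [x ->] := pm_class_surj a; have [y ->] := pm_class_surj b.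
have [z ->] := pm_class_surj c; rewrite !pquot_addE; apply/pm_class_eq; exact: pm_addA.
Qed.

Lemma pquot_addC : commutative pquot_add.
Proof.
move=> a b; have [x ->] := pm_class_surj a; have [y ->] := pm_class_surj b.
by rewrite !pquot_addE; apply/pm_class_eq; apply: pm_addC.
Qed.

Lemma pquot_add0 : left_id (pm_class (pm_zero p)) pquot_add.
Proof.
move=> a; have [x ->] := pm_class_surj a.
by rewrite pquot_addE; apply/pm_class_eq; apply: pm_add0.
Qed.

Lemma pquot_addN : left_inverse (pm_class (pm_zero p)) pquot_opp pquot_add.
Proof.
move=> a; have [x ->] := pm_class_surj a.
by rewrite pquot_oppE pquot_addE; apply/pm_class_eq; apply: pm_addN.
Qed.

End PquotZmod.

HB.instance Definition _ (R : comPzRingType) (p : premodule R) :=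
  GRing.isZmodule.Build (pquot_car p)
    (@pquot_addA R p) (@pquot_addC R p) (@pquot_add0 R p) (@pquot_addN R p).

Section PquotLmod.
Variables (R : comPzRingType) (p : premodule R).

Lemma pm_classD x y : pm_class x + pm_class y = pm_class (@pm_add R p x y).
Proof. exact: pquot_addE. Qed.

Lemma pquot_scaleA a b (q : pquot_car p) :
  pquot_scale a (pquot_scale b q) = pquot_scale (a * b) q.
Proof.
have [x ->] := pm_class_surj q.
by rewrite !pquot_scaleE; apply/pm_class_eq; apply: pm_scaleA.
Qed.

Lemma pquot_scale1 : left_id 1 (@pquot_scale R p).
Proof.
move=> q; have [x ->] := pm_class_surj q.
by rewrite pquot_scaleE; apply/pm_class_eq; apply: pm_scale1.
Qed.

Lemma pquot_scaleDr : right_distributive (@pquot_scale R p) +%R.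
Proof.
move=> a q1 q2; have [x ->] := pm_class_surj q1; have [y ->] := pm_class_surj q2.
rewrite pm_classD !pquot_scaleE pm_classD.
by apply/pm_class_eq; apply: pm_scaleDr.
Qed.

Lemma pquot_scaleDl (q : pquot_car p) : {morph (@pquot_scale R p)^~ q : a b / a + b}.
Proof.
move=> a b; have [x ->] := pm_class_surj q.
by rewrite !pquot_scaleE pm_classD; apply/pm_class_eq; apply: pm_scaleDl.
Qed.

End PquotLmod.

HB.instance Definition _ (R : comPzRingType) (p : premodule R) :=
  GRing.Zmodule_isLmodule.Build R (pquot_car p)
    (@pquot_scaleA R p) (@pquot_scale1 R p) (@pquot_scaleDr R p) (@pquot_scaleDl R p).

Definition pquot (R : comPzRingType) (p : premodule R) : lmodType R := pquot_car p.

Section PquotTheory.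
Variables (R : comPzRingType) (p : premodule R).

Lemma pm_classZ k x : k *: (pm_class x : pquot p) = pm_class (@pm_scale R p k x).
Proof. exact: pquot_scaleE. Qed.

Lemma pm_class0 : (0 : pquot p) = pm_class (pm_zero p).
Proof. by []. Qed.

End PquotTheory.

Section SubmoduleQuotient.
Variables (R : comPzRingType) (V : lmodType R) (W : V -> Prop).
Hypotheses (W0 : W 0) (W_lin : forall k x y, W x -> W y -> W (k *: x + y)).

Let Wopp x : W x -> W (- x).
Proof. by move=> Wx; rewrite -scaleN1r -[_ *: x]addr0; apply: W_lin. Qed.

Let Wadd x y : W x -> W y -> W (x + y).
Proof. by move=> Wx Wy; rewrite -[x]scale1r; apply: W_lin. Qed.

Definition modW_eqv (x y : V) := W (x - y).

Let modW_refl x : modW_eqv x x. Proof. by rewrite /modW_eqv subrr. Qed.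

Let modW_eq x y : x = y -> modW_eqv x y. Proof. by move->; apply: modW_refl. Qed.

Let modW_sym x y : modW_eqv x y -> modW_eqv y x.
Proof. by move=> /Wopp; rewrite opprB. Qed.

Let modW_trans x y z : modW_eqv x y -> modW_eqv y z -> modW_eqv x z.
Proof. by rewrite /modW_eqv => xy yz; rewrite -[x](subrK y) -addrA; apply: Wadd. Qed.

Let modW_add x x' y y' : modW_eqv x x' -> modW_eqv y y' -> modW_eqv (x + y) (x' + y').
Proof. by rewrite /modW_eqv opprD addrACA; apply: Wadd. Qed.

Let modW_opp x x' : modW_eqv x x' -> modW_eqv (- x) (- x').
Proof. by move=> /Wopp; rewrite /modW_eqv opprD. Qed.

Let modW_scale k x x' : modW_eqv x x' -> modW_eqv (k *: x) (k *: x').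
Proof. by rewrite /modW_eqv -scalerBr -[_ *: _]addr0 => xx'; apply: W_lin. Qed.

Definition modW_premodule : premodule R :=
  @Premodule R V modW_eqv +%R -%R 0 *:%R modW_refl modW_sym modW_trans
    modW_add modW_opp modW_scale
    (fun x y z => modW_eq (addrA x y z)) (fun x y => modW_eq (addrC x y))
    (fun x => modW_eq (add0r x)) (fun x => modW_eq (addNr x))
    (fun a b x => modW_eq (scalerA a b x)) (fun x => modW_eq (scale1r x))
    (fun a x y => modW_eq (scalerDr a x y)) (fun a b x => modW_eq (scalerDl x a b)).

Definition quotient : lmodType R := pquot modW_premodule.

Definition quot_pi (x : V) : quotient := @pm_class R modW_premodule x.

Lemma quot_pi_is_lin : is_lin quot_pi.
Proof. by move=> k x y; rewrite /quot_pi pm_classZ pm_classD. Qed.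

Lemma quot_pi_eq0 x : quot_pi x = 0 <-> W x.
Proof. by rewrite pm_class0 pm_class_eq /= /modW_eqv subr0. Qed.

Lemma quot_pi_surj (q : quotient) : exists x, q = quot_pi x.
Proof. exact: (@pm_class_surj R modW_premodule q). Qed.

End SubmoduleQuotient.

Section Cokernel.
Variables (R : comPzRingType) (X Y : lmodType R) (u : {linear Y -> X}).

Definition in_image (x : X) := exists y, x = u y.

Lemma in_image0 : in_image 0.
Proof. by exists 0; rewrite linear0. Qed.

Lemma in_image_lin k x x' : in_image x -> in_image x' -> in_image (k *: x + x').
Proof. by move=> [y ->] [y' ->]; exists (k *: y + y'); rewrite linearP. Qed.

Definition coker : lmodType R := quotient in_image0 in_image_lin.

Definition coker_pi : {linear X -> coker} := linmap (quot_pi_is_lin in_image0 in_image_lin).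

Lemma coker_pi_eq0 x : coker_pi x = 0 <-> in_image x.
Proof. exact: quot_pi_eq0. Qed.

Lemma coker_pi_im y : coker_pi (u y) = 0.
Proof. by apply/coker_pi_eq0; exists y. Qed.

Lemma coker_pi_surj (q : coker) : exists x, q = coker_pi x.
Proof. exact: quot_pi_surj. Qed.

End Cokernel.

(** * Tensor products *)

Section TensorConstruction.
Variables (R : comPzRingType) (M N : lmodType R).

Definition bilin (P : lmodType R) (b : M -> N -> P) :=
  (forall m, is_lin (b m)) /\ (forall n, is_lin (fun m => b m n)).

Definition formal_eval (P : lmodType R) (b : M -> N -> P) (l : seq (M * N)) : P :=
  \sum_(q <- l) b q.1 q.2.

Definition formal_opp (l : seq (M * N)) := [seq (- q.1, q.2) | q <- l].
Definition formal_scale k (l : seq (M * N)) := [seq (k *: q.1, q.2) | q <- l].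

(* Formal sums are identified when no bilinear map separates them; this yields the
   tensor relations without listing them (the quantification over all modules is
   harmless since it lands in Prop). *)
Definition formal_eqv (l1 l2 : seq (M * N)) : Prop :=
  forall (P : lmodType R) (b : M -> N -> P), bilin b -> formal_eval b l1 = formal_eval b l2.

Section FormalEval.
Variables (P : lmodType R) (b : M -> N -> P) (bL : bilin b).

Lemma formal_eval_cat l1 l2 : formal_eval b (l1 ++ l2) = formal_eval b l1 + formal_eval b l2.
Proof. by rewrite /formal_eval big_cat. Qed.

Lemma formal_eval_scale k l : formal_eval b (formal_scale k l) = k *: formal_eval b l.
Proof.
rewrite /formal_eval big_map scaler_sumr; apply: eq_bigr => q _.
exact: (is_linZ (bL.2 q.2)).
Qed.

Lemma formal_eval_opp l : formal_eval b (formal_opp l) = - formal_eval b l.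
Proof.
rewrite -scaleN1r -formal_eval_scale /formal_eval !big_map; apply: eq_bigr => q _.
by rewrite scaleN1r.
Qed.

End FormalEval.

Let fe_eq l1 l2 : l1 = l2 -> formal_eqv l1 l2. Proof. by move->. Qed.

Let fe_sym x y : formal_eqv x y -> formal_eqv y x.
Proof. by move=> xy P b bL; rewrite xy. Qed.

Let fe_trans x y z : formal_eqv x y -> formal_eqv y z -> formal_eqv x z.
Proof. by move=> xy yz P b bL; rewrite xy ?yz. Qed.

Let fe_cat x x' y y' : formal_eqv x x' -> formal_eqv y y' -> formal_eqv (x ++ y) (x' ++ y').
Proof. by move=> xx' yy' P b bL; rewrite !formal_eval_cat xx' ?yy'. Qed.

Let fe_opp x x' : formal_eqv x x' -> formal_eqv (formal_opp x) (formal_opp x').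
Proof. by move=> xx' P b bL; rewrite !formal_eval_opp // xx'. Qed.

Let fe_scale k x x' : formal_eqv x x' -> formal_eqv (formal_scale k x) (formal_scale k x').
Proof. by move=> xx' P b bL; rewrite !formal_eval_scale // xx'. Qed.

Let fe_catC x y : formal_eqv (x ++ y) (y ++ x).
Proof. by move=> P b bL; rewrite !formal_eval_cat addrC. Qed.

Let fe_catN x : formal_eqv (formal_opp x ++ x) [::].
Proof. by move=> P b bL; rewrite formal_eval_cat formal_eval_opp // addNr /formal_eval big_nil. Qed.

Let fe_scaleA a c x : formal_eqv (formal_scale a (formal_scale c x)) (formal_scale (a * c) x).
Proof. by move=> P b bL; rewrite !formal_eval_scale // scalerA. Qed.

Let fe_scale1 x : formal_eqv (formal_scale 1 x) x.
Proof. by move=> P b bL; rewrite formal_eval_scale // scale1r. Qed.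

Let fe_scaleDr a x y :
  formal_eqv (formal_scale a (x ++ y)) (formal_scale a x ++ formal_scale a y).
Proof. by move=> P b bL; rewrite !(formal_eval_scale, formal_eval_cat) // scalerDr. Qed.

Let fe_scaleDl a c x :
  formal_eqv (formal_scale (a + c) x) (formal_scale a x ++ formal_scale c x).
Proof. by move=> P b bL; rewrite !(formal_eval_scale, formal_eval_cat) // scalerDl. Qed.

Definition formal_premodule : premodule R :=
  @Premodule R (seq (M * N)) formal_eqv cat formal_opp [::] formal_scale
    (fun x => fe_eq (erefl x)) fe_sym fe_trans fe_cat fe_opp fe_scale
    (fun x y z => fe_eq (catA x y z)) fe_catC (fun x => fe_eq (cat0s x)) fe_catN
    fe_scaleA fe_scale1 fe_scaleDr fe_scaleDl.

Definition tensor_mod : lmodType R := pquot formal_premodule.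

Definition tensor_tmul (m : M) (n : N) : tensor_mod :=
  @pm_class R formal_premodule [:: (m, n)].

Lemma pm_class_formal_sum (l : seq (M * N)) :
  (@pm_class R formal_premodule l : tensor_mod) = \sum_(q <- l) tensor_tmul q.1 q.2.
Proof.
elim: l => [|[m n] l IH]; first by rewrite big_nil pm_class0.
by rewrite big_cons -IH pm_classD.
Qed.

Lemma tensor_tmul_bilin : bilin tensor_tmul.
Proof.
split=> [m|n] k x y; rewrite /tensor_tmul pm_classZ pm_classD;
  apply/pm_class_eq => P b [bLr bLl];
  rewrite /formal_eval /= !big_cons !big_nil /= !addr0.
  by rewrite (is_linD (bLr m)) (is_linZ (bLr m)) (is_linZ (bLl x)).
exact: (is_linD (bLl n)).
Qed.

Section Lift.
Variables (P : lmodType R) (b : M -> N -> P) (bL : bilin b).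

Definition tensor_lift (q : tensor_mod) : P := formal_eval b (@pm_repr R formal_premodule q).

Lemma tensor_lift_class l : tensor_lift (@pm_class R formal_premodule l) = formal_eval b l.
Proof. exact: (@pm_repr_eqv R formal_premodule l). Qed.

Lemma tensor_lift_is_lin : is_lin tensor_lift.
Proof.
move=> k q1 q2; have [l1 ->] := pm_class_surj q1; have [l2 ->] := pm_class_surj q2.
rewrite pm_classZ pm_classD !tensor_lift_class /=.
by rewrite formal_eval_cat // formal_eval_scale.
Qed.

End Lift.

Lemma tensor_mod_univ (P : lmodType R) (b : M -> N -> P) :
  (forall m, is_lin (b m)) -> (forall n, is_lin (fun m => b m n)) ->
  (exists f : {linear tensor_mod -> P}, forall m n, f (tensor_tmul m n) = b m n) /\
  (forall f g : {linear tensor_mod -> P},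
      (forall m n, f (tensor_tmul m n) = b m n) ->
      (forall m n, g (tensor_tmul m n) = b m n) -> f =1 g).
Proof.
move=> bLr bLl; have bL : bilin b by [].
split.
  exists (linmap (tensor_lift_is_lin bL)) => m n /=.
  by rewrite (tensor_lift_class bL) /formal_eval big_cons big_nil addr0.
move=> f g fb gb q; have [l ->] := pm_class_surj q.
by rewrite pm_class_formal_sum !linear_sum; apply: eq_bigr => -[m n] _; rewrite fb gb.
Qed.

Definition tensor : tensor_product M N :=
  @TensorProduct R M N tensor_mod tensor_tmul tensor_tmul_bilin tensor_mod_univ.

End TensorConstruction.

Section TensorTheory.
Variables (R : comPzRingType) (M N : lmodType R) (T : tensor_product M N).

Lemma tp_linr m : is_lin (tp_map T m). Proof. exact: (tp_bilin T).1. Qed.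
Lemma tp_linl n : is_lin (fun m => tp_map T m n). Proof. exact: (tp_bilin T).2. Qed.

Lemma tensor_ext (P : lmodType R) (f g : {linear T -> P}) :
  (forall m n, f (tp_map T m n) = g (tp_map T m n)) -> f =1 g.
Proof.
move=> fg; have bLr m : is_lin (fun n => f (tp_map T m n)).
  by move=> k x y; rewrite (tp_linr m) linearP.
have bLl n : is_lin (fun m => f (tp_map T m n)).
  by move=> k x y; rewrite (tp_linl n) linearP.
by apply: (tp_univ T bLr bLl).2.
Qed.

Lemma tensor_ind (W : T -> Prop) :
  W 0 -> (forall k x y, W x -> W y -> W (k *: x + y)) ->
  (forall m n, W (tp_map T m n)) -> forall x, W x.
Proof.
move=> W0 W_lin Wt x; apply/(quot_pi_eq0 W0 W_lin).
pose pi := linmap (quot_pi_is_lin W0 W_lin).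
have -> : quot_pi W0 W_lin x = pi x by [].
by rewrite (@tensor_ext _ pi \0) // => m n /=; apply/quot_pi_eq0.
Qed.

End TensorTheory.

Section TensorMaps.
Variables (R : comPzRingType) (M : lmodType R).

Lemma tensor_map_exists (A B : lmodType R) (f : {linear A -> B})
    (TA : tensor_product M A) (TB : tensor_product M B) :
  exists phi : {linear TA -> TB}, is_tensor_map f phi.
Proof.
have bLr m : is_lin (fun a => tp_map TB m (f a)).
  by move=> k x y; rewrite linearP (tp_linr TB m).
have [[phi phiE] _] := tp_univ TA bLr (fun a => tp_linl TB (f a)).
by exists phi.
Qed.

Variables (A B C : lmodType R).
Variables (TA : tensor_product M A) (TB : tensor_product M B) (TC : tensor_product M C).

Lemma tensor_map_comp (f : A -> B) (g : B -> C) (phi : TA -> TB) (psi : TB -> TC) :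
  is_tensor_map f phi -> is_tensor_map g psi -> is_tensor_map (g \o f) (psi \o phi).
Proof. by move=> fphi gpsi m a /=; rewrite fphi gpsi. Qed.

Lemma tensor_map_scale s : is_tensor_map ( *:%R s : A -> A) ( *:%R s : TA -> TA).
Proof. by move=> m a /=; rewrite (is_linZ (tp_linr TA m)). Qed.

Lemma tensor_map_id : is_tensor_map (@idfun A) (@idfun TA).
Proof. by []. Qed.

Lemma tensor_map_unique (f1 f2 : A -> B) (phi1 phi2 : {linear TA -> TB}) :
  f1 =1 f2 -> is_tensor_map f1 phi1 -> is_tensor_map f2 phi2 -> phi1 =1 phi2.
Proof. by move=> f12 f1phi f2phi; apply: tensor_ext => m a; rewrite f1phi f2phi f12. Qed.

End TensorMaps.

(** * Right exactness of tensor products up to scalars *)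

Section Factorization.
Variables (R : comPzRingType) (A B C : lmodType R).
Variables (f : {linear A -> B}) (g : {linear B -> C}) (s : R).
Hypothesis ker_g : forall b, g b = 0 -> exists a, f a = s *: b.
Hypothesis g_surj : forall c, exists b, g b = s *: c.

Definition preim (c : C) : B := projT1 (cid (g_surj c)).

Lemma preimP c : g (preim c) = s *: c.
Proof. by rewrite /preim; case: cid. Qed.

Variables (Q : lmodType R) (k : B -> Q) (kL : is_lin k).
Hypothesis kf : forall a, k (f a) = 0.

(* k kills Im f, hence factors through g, a cokernel of f up to s, at the cost of
   the scalar s * s (factor_g). *)
Definition factor (c : C) : Q := k (s *: preim c).

Lemma factor_congr b b' : g b = g b' -> k (s *: b) = k (s *: b').
Proof.
move=> gbb'.
have [a fa] : exists a, f a = s *: (b - b') by apply: ker_g; rewrite linearB gbb' subrr.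
by rewrite -[s *: b](subrK (s *: b')) -scalerBr -fa (is_linD kL) kf add0r.
Qed.

Lemma factor_is_lin : is_lin factor.
Proof.
move=> r c1 c2; rewrite /factor (@factor_congr _ (r *: preim c1 + preim c2)).
  by rewrite scalerDr scalerA mulrC -scalerA (is_linD kL) (is_linZ kL).
by rewrite linearP !preimP scalerDr !scalerA mulrC.
Qed.

Lemma factor_g b : factor (g b) = (s * s) *: k b.
Proof.
rewrite /factor (@factor_congr _ (s *: b)) ?preimP ?linearZ //.
by rewrite -scalerA !(is_linZ kL).
Qed.

End Factorization.

Section TensorRightExact.
Variables (R : comPzRingType) (M A B C : lmodType R).
Variables (f : {linear A -> B}) (g : {linear B -> C}) (s : R).
Variables (TA : tensor_product M A) (TB : tensor_product M B) (TC : tensor_product M C).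
Variables (phi : {linear TA -> TB}) (psi : {linear TB -> TC}).
Hypotheses (fphi : is_tensor_map f phi) (gpsi : is_tensor_map g psi).

Lemma tensor_im_sub_ker : (forall a, g (s *: f a) = 0) -> forall x, psi (s *: phi x) = 0.
Proof.
move=> im_f x; have sq := tensor_map_comp (tensor_map_comp fphi (tensor_map_scale _ s)) gpsi.
have zero : is_tensor_map (\0 : A -> C) (\0 : {linear TA -> TC}).
  by move=> m a; rewrite /= (is_lin0 (tp_linr TC m)).
by rewrite -[psi _]/((psi \o *:%R s \o phi) x) (tensor_map_unique _ sq zero).
Qed.

Lemma tensor_uS_surj : (forall b, exists a, f a = s *: b) -> forall z, exists y, phi y = s *: z.
Proof.
move=> f_surj; apply: tensor_ind.
- by exists 0; rewrite linear0 scaler0.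
- move=> k x x' [y yx] [y' yx']; exists (k *: y + y').
  by rewrite linearP yx yx' scalerDr !scalerA mulrC.
- move=> m b; have [a fa] := f_surj b.
  by exists (tp_map TA m a); rewrite fphi fa (is_linZ (tp_linr TB m)).
Qed.

Lemma tensor_ker_sub_im :
  (forall b, g b = 0 -> exists a, f a = s *: b) -> (forall c, exists b, g b = s *: c) ->
  forall y, psi y = 0 -> exists x, phi x = (s * s) *: y.
Proof.
move=> ker_g g_surj.
pose k m b := coker_pi phi (tp_map TB m b).
have kL m : is_lin (k m) by move=> r b b'; rewrite /k (tp_linr TB) linearP.
have kf m a : k m (f a) = 0 by rewrite /k -fphi coker_pi_im.
pose b m c := factor g_surj (k m) c.
have bLr m : is_lin (b m) := factor_is_lin ker_g g_surj (kL m) (kf m).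
have bLl c : is_lin (fun m => b m c).
  by move=> r m m'; rewrite /b /factor /k (tp_linl TB) linearP.
have [[F Fb] _] := tp_univ TC bLr bLl.
have Fpsi z : F (psi z) = coker_pi phi ((s * s) *: z).
  have -> : F (psi z) = (F \o psi) z by [].
  have -> : coker_pi phi ((s * s) *: z) = (coker_pi phi \o *:%R (s * s)) z by [].
  apply: tensor_ext => m b'; rewrite /= gpsi Fb /b (factor_g ker_g g_surj (kL m) (kf m)).
  by rewrite /k -linearZ.
move=> y psiy.
have /coker_pi_eq0 [x ->] : coker_pi phi ((s * s) *: y) = 0 by rewrite -Fpsi psiy linear0.
by exists x.
Qed.

End TensorRightExact.

(** * u-S-monomorphisms and the characterisation of u-S-absolute purity *)

Section USMono.
Variables (R : comPzRingType) (S : R -> Prop).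
Hypothesis HS : mult_subset S.

Let SM a b : S a -> S b -> S (a * b). Proof. exact: HS.2. Qed.

Definition uS_mono (A B : lmodType R) (f : A -> B) :=
  exists s, S s /\ forall a, f a = 0 -> s *: a = 0.

Definition uS_tensor_mono (A B : lmodType R) (f : {linear A -> B}) :=
  forall (M : lmodType R) (TA : tensor_product M A) (TB : tensor_product M B)
         (phi : {linear TA -> TB}), is_tensor_map f phi -> uS_mono phi.

Lemma uS_mono_comp (A B C : lmodType R) (f : {linear A -> B}) (g : {linear B -> C}) :
  uS_mono f -> uS_mono g -> uS_mono (g \o f).
Proof.
move=> [s [Ss fs]] [t [St gt]]; exists (s * t); split; first exact: SM.
by move=> a /gt; rewrite -linearZ => /fs; rewrite scalerA mulrC.
Qed.

Lemma uS_mono_of_comp (A B C : lmodType R) (f : A -> B) (g : {linear B -> C}) :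
  uS_mono (g \o f) -> uS_mono f.
Proof. by move=> [s [Ss gfs]]; exists s; split=> // a /= fa; apply: gfs; rewrite /= fa linear0. Qed.

Lemma uS_mono_of_comp_uS_surj (A B C : lmodType R) (f : {linear A -> B}) (g : {linear B -> C}) s :
  S s -> (forall b, exists a, f a = s *: b) -> uS_mono (g \o f) -> uS_mono g.
Proof.
move=> Ss f_surj [t [St gft]]; exists (t * s); split; first exact: SM.
move=> b gb; have [a fa] := f_surj b.
have gfa : g (f a) = 0 by rewrite fa linearZ_LR gb scaler0.
by rewrite -scalerA -fa -linearZ (gft a gfa) linear0.
Qed.

Lemma uS_mono_of_retraction (A B : lmodType R) (f : {linear A -> B}) (k : {linear B -> A}) s :
  S s -> (forall a, k (f a) = s *: a) -> uS_mono f.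
Proof. by move=> Ss kf; exists s; split=> // a fa; rewrite -kf fa linear0. Qed.

Lemma uS_exact_build (A B C : lmodType R) (f : {linear A -> B}) (g : {linear B -> C}) s1 s2 s3 s4 :
  S s1 -> S s2 -> S s3 -> S s4 ->
  (forall a, f a = 0 -> s1 *: a = 0) ->
  (forall b, g b = 0 -> exists a, f a = s2 *: b) ->
  (forall a, g (s3 *: f a) = 0) ->
  (forall c, exists b, g b = s4 *: c) -> uS_exact S f g.
Proof.
move=> S1 S2 S3 S4 ker_f ker_g im_f g_surj.
exists (s1 * s2 * s3 * s4); split; first by do !apply: SM.
split.
  move=> a /ker_f fa.
  have -> : s1 * s2 * s3 * s4 = (s2 * s3 * s4) * s1 by ring.
  by rewrite -scalerA fa scaler0.
split.
  move=> b /ker_g [a fa]; exists ((s1 * s3 * s4) *: a); rewrite linearZ_LR fa scalerA.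
  by congr (_ *: _); ring.
split.
  move=> a; have -> : s1 * s2 * s3 * s4 = (s1 * s2 * s4) * s3 by ring.
  by rewrite -scalerA linearZ_LR im_f scaler0.
move=> c; have [b gb] := g_surj ((s1 * s2 * s3) *: c).
by exists b; rewrite gb scalerA; congr (_ *: _); ring.
Qed.

Lemma uS_exact_mono (A B C : lmodType R) (f : {linear A -> B}) (g : {linear B -> C}) :
  uS_exact S f g -> uS_mono f.
Proof. by move=> [s [Ss [ker_f _]]]; exists s. Qed.

Lemma uS_pureP (A B C : lmodType R) (f : {linear A -> B}) (g : {linear B -> C}) :
  uS_pure S f g <-> uS_exact S f g /\ uS_tensor_mono f.
Proof.
split=> [[fg fg_tensor]|[fg f_tensor]].
  split=> // M TA TB phi fphi.
  have [psi gpsi] := tensor_map_exists g TB (tensor M C).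
  exact: uS_exact_mono (fg_tensor M TA TB _ phi psi fphi gpsi).
split=> // M TA TB TC phi psi fphi gpsi.
have [t [St ker_phi]] := f_tensor M TA TB phi fphi.
have [s [Ss [_ [ker_g [im_f g_surj]]]]] := fg.
apply: (uS_exact_build St (SM Ss Ss) Ss Ss ker_phi).
- exact: tensor_ker_sub_im fphi gpsi ker_g g_surj.
- exact: tensor_im_sub_ker fphi gpsi im_f.
- exact: tensor_uS_surj gpsi g_surj.
Qed.

Lemma uS_exact_coker (X Y : lmodType R) (u : {linear X -> Y}) :
  uS_mono u -> uS_exact S u (coker_pi u).
Proof.
move=> [s [Ss ker_u]]; exists s; do !split => //.
- by move=> y /coker_pi_eq0 [x ->]; exists (s *: x); rewrite linearZ.
- by move=> x; rewrite -linearZ coker_pi_im.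
- by move=> q; have [y ->] := coker_pi_surj q; exists (s *: y); rewrite linearZ.
Qed.

Lemma uS_abs_pureP (E : lmodType R) :
  uS_abs_pure S E <->
  forall (B : lmodType R) (f : {linear E -> B}), uS_mono f -> uS_tensor_mono f.
Proof.
split=> [AP B f f_mono|AP B C f g fg].
  by have /uS_pureP [] := AP _ _ f _ (uS_exact_coker f_mono).
by apply/uS_pureP; split=> //; apply/AP/(uS_exact_mono fg).
Qed.

End USMono.

Section Pushout.
Variables (R : comPzRingType) (A B D : lmodType R).
Variables (f : {linear A -> B}) (h : {linear A -> D}).

Definition pushout_rel (a : A) : B * D := (f a, - h a).

Lemma pushout_rel_is_lin : is_lin pushout_rel.
Proof. by move=> k x y; rewrite /pushout_rel !linearP /=; congr (_, _); rewrite opprD scalerN. Qed.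

Let rel := linmap pushout_rel_is_lin.

Definition pushout : lmodType R := coker rel.

Lemma pushout_inl_is_lin : is_lin (fun b : B => coker_pi rel (b, 0)).
Proof. by move=> k x y; rewrite -linearP; congr (coker_pi _ (_, _)); rewrite /= scaler0 addr0. Qed.

Lemma pushout_inr_is_lin : is_lin (fun d : D => coker_pi rel (0, d)).
Proof. by move=> k x y; rewrite -linearP; congr (coker_pi _ (_, _)); rewrite /= scaler0 addr0. Qed.

Definition pushout_inl : {linear B -> pushout} := linmap pushout_inl_is_lin.
Definition pushout_inr : {linear D -> pushout} := linmap pushout_inr_is_lin.

Lemma pushout_inlE b : pushout_inl b = coker_pi rel (b, 0). Proof. by []. Qed.
Lemma pushout_inrE d : pushout_inr d = coker_pi rel (0, d). Proof. by []. Qed.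

Lemma pushout_comm a : pushout_inl (f a) = pushout_inr (h a).
Proof.
apply/eqP; rewrite -subr_eq0 pushout_inlE pushout_inrE -linearB.
have -> : ((f a, 0) : B * D) - (0, h a) = rel a.
  by congr (_, _); rewrite /= ?oppr0 ?addr0 ?add0r.
by rewrite coker_pi_im.
Qed.

Lemma pushout_inr_inj : (forall a, f a = 0 -> h a = 0) -> injective pushout_inr.
Proof.
move=> ker_fh d d'; rewrite !pushout_inrE => /eqP; rewrite -subr_eq0 -linearB.
move=> /eqP/coker_pi_eq0 [a [fa0 dd']].
by apply/eqP; rewrite -subr_eq0 dd' ker_fh ?oppr0 // -fa0 subrr.
Qed.

Lemma pushout_inl_ker r :
  (forall a, h a = 0 -> r *: a = 0) -> forall b, pushout_inl b = 0 -> r *: b = 0.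
Proof.
move=> ker_h b; rewrite pushout_inlE => /coker_pi_eq0 [a [-> ha0]].
by rewrite -linearZ ker_h ?linear0 // -[h a]opprK -ha0 oppr0.
Qed.

End Pushout.

Section Closure.
Variables (R : comPzRingType) (S : R -> Prop).
Hypothesis HS : mult_subset S.

Let SM a b : S a -> S b -> S (a * b). Proof. exact: HS.2. Qed.

Lemma abs_pure_uS_abs_pure (E : lmodType R) : abs_pure E -> uS_abs_pure S E.
Proof.
move=> AP; apply/(uS_abs_pureP HS) => B f [s [Ss ker_f]] M TE TB phi fphi.
pose sE : {linear E -> E} := *:%R s.
pose TQ := tensor M (pushout f sE).
have inr_inj : injective (pushout_inr f sE) by apply: pushout_inr_inj => a /ker_f.
have [inlt inlE] := tensor_map_exists (pushout_inl f sE) TB TQ.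
have [inrt inrE] := tensor_map_exists (pushout_inr f sE) TE TQ.
have sq : inlt \o phi =1 inrt \o ( *:%R s : {linear TE -> TE}).
  apply: (tensor_map_unique (pushout_comm f sE)).
    exact: tensor_map_comp fphi inlE.
  exact: tensor_map_comp (tensor_map_scale _ _) inrE.
exists s; split=> // z phiz; apply: (AP _ _ inr_inj M TE _ inrt inrE).
by rewrite -[inrt _]/((inrt \o *:%R s) z) -sq /= phiz !linear0.
Qed.

Lemma uS_injective_uS_abs_pure (E : lmodType R) : uS_injective S E -> uS_abs_pure S E.
Proof.
move=> Einj; apply/(uS_abs_pureP HS) => B f f_mono M TE TB phi fphi.
have [s [Ss [_ [_ [_ ext]]]]] := Einj _ _ _ _ _ (uS_exact_coker f_mono).
have [k kf] := ext idfun.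
have [kt kE] := tensor_map_exists k TB TE.
have kfE : k \o f =1 idfun \o *:%R s by move=> a; rewrite /= kf.
apply: (uS_mono_of_retraction (k := kt) Ss).
apply: (tensor_map_unique kfE (tensor_map_comp fphi kE)).
exact: tensor_map_comp (tensor_map_scale TE s) (tensor_map_id TE).
Qed.

Lemma uS_abs_pure_uS_iso (A B : lmodType R) (f : {linear A -> B}) :
  uS_iso S f -> uS_abs_pure S A -> uS_abs_pure S B.
Proof.
move=> [s [Ss [ker_f f_surj]]] /(uS_abs_pureP HS) APA.
apply/(uS_abs_pureP HS) => D h h_mono M TB TD phih hphih.
have [phif fphif] := tensor_map_exists f (tensor M A) TB.
have f_mono : uS_mono S f by exists s.
have hf_mono : uS_mono S (h \o f) := uS_mono_comp HS f_mono h_mono.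
apply: (uS_mono_of_comp_uS_surj HS Ss (tensor_uS_surj fphif f_surj)).
exact: APA _ _ hf_mono M _ _ _ (tensor_map_comp fphif hphih).
Qed.

Lemma uS_abs_pure_pure_sub (A B C : lmodType R) (f : {linear A -> B}) (g : {linear B -> C}) :
  uS_pure S f g -> uS_abs_pure S B -> uS_abs_pure S A.
Proof.
move=> /(uS_pureP HS) [_ f_tensor] /(uS_abs_pureP HS) APB.
apply/(uS_abs_pureP HS) => D h [r [Sr ker_h]] M TA TD phih hphih.
pose Q := pushout f h.
have [inlt inlE] := tensor_map_exists (pushout_inl f h) (tensor M B) (tensor M Q).
have [inrt inrE] := tensor_map_exists (pushout_inr f h) TD (tensor M Q).
have [phif fphif] := tensor_map_exists f TA (tensor M B).
have inl_mono : uS_mono S (pushout_inl f h).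
  by exists r; split=> //; apply: pushout_inl_ker.
have sq : inlt \o phif =1 inrt \o phih.
  exact: tensor_map_unique (pushout_comm f h) (tensor_map_comp fphif inlE)
    (tensor_map_comp hphih inrE).
have [t [St ker_comp]] :=
  uS_mono_comp HS (f_tensor M TA _ phif fphif) (APB _ _ inl_mono M _ _ inlt inlE).
apply: (uS_mono_of_comp (g := inrt)).
by exists t; split=> // z; rewrite -sq; apply: ker_comp.
Qed.

(* The map C -> D / h(f(A)) induced by h. *)
Lemma factor_coker_uS_mono (A B C D : lmodType R)
    (f : {linear A -> B}) (g : {linear B -> C}) (h : {linear B -> D}) s r
    (ker_g : forall b, g b = 0 -> exists a, f a = s *: b)
    (g_surj : forall c, exists b, g b = s *: c) :
  (forall a, g (s *: f a) = 0) -> (forall b, h b = 0 -> r *: b = 0) ->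
  forall c, factor g_surj (coker_pi (h \o f) \o h) c = 0 -> (s * r * s * s) *: c = 0.
Proof.
move=> im_f ker_h c /coker_pi_eq0 [a] /= /eqP; rewrite -subr_eq0 -linearB.
move=> /eqP/ker_h; rewrite scalerBr => /eqP; rewrite subr_eq0 => /eqP eq_r.
have -> : (s * r * s * s) *: c = s *: (r *: (s *: (s *: c))).
  by rewrite !scalerA; congr (_ *: _); ring.
have := congr1 g eq_r; rewrite !(linearZ_LR g) preimP => ->.
by rewrite scalerA mulrC -scalerA -(linearZ_LR g) im_f scaler0.
Qed.

Lemma uS_abs_pure_ext (A B C : lmodType R) (f : {linear A -> B}) (g : {linear B -> C}) :
  uS_exact S f g -> uS_abs_pure S A -> uS_abs_pure S C -> uS_abs_pure S B.
Proof.
move=> [s [Ss [ker_f [ker_g [im_f g_surj]]]]] /(uS_abs_pureP HS) APA /(uS_abs_pureP HS) APC.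
apply/(uS_abs_pureP HS) => D h [r [Sr ker_h]] M TB TD phih hphih.
pose pi := coker_pi (h \o f).
pose k := pi \o h.
have kL : is_lin k := linear_is_lin (pi \o h).
have kf a : k (f a) = 0 := coker_pi_im (h \o f) a.
pose h' := linmap (factor_is_lin ker_g g_surj kL kf).
have f_mono : uS_mono S f by exists s.
have h_mono : uS_mono S h by exists r.
have hf_mono : uS_mono S (h \o f) := uS_mono_comp HS f_mono h_mono.
have h'_mono : uS_mono S h'.
  by exists (s * r * s * s); split; [do !apply: SM | exact: factor_coker_uS_mono].
have [phif fphif] := tensor_map_exists f (tensor M A) TB.
have [phig gphig] := tensor_map_exists g TB (tensor M C).
have [phih' h'phih'] := tensor_map_exists h' (tensor M C) (tensor M (coker (h \o f))).
have [phipi piphipi] := tensor_map_exists pi TD (tensor M (coker (h \o f))).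
have [t1 [St1 ker_hf]] := APA _ _ hf_mono M _ _ _ (tensor_map_comp fphif hphih).
have [t2 [St2 ker_h']] := APC _ _ h'_mono M _ _ _ h'phih'.
have comm : h' \o g =1 pi \o *:%R (s * s) \o h.
  move=> b; rewrite -[LHS]/(factor g_surj k (g b)) (factor_g ker_g g_surj kL kf).
  by rewrite -[RHS]/(pi ((s * s) *: h b)) (linearZ_LR pi).
have sq : phih' \o phig =1 phipi \o *:%R (s * s) \o phih.
  apply: (tensor_map_unique comm (tensor_map_comp gphig h'phih')).
  exact: tensor_map_comp (tensor_map_comp hphih (tensor_map_scale _ _)) piphipi.
exists (t1 * (s * s) * t2); split; first by do !apply: SM.
move=> z phihz.
have : phig (t2 *: z) = 0.
  rewrite (linearZ_LR phig); apply: ker_h'.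
  by rewrite -[LHS]/((phih' \o phig) z) sq /= phihz scaler0 linear0.
case/(tensor_ker_sub_im fphif gphig ker_g g_surj) => x phifx.
have /ker_hf t1x : phih (phif x) = 0 by rewrite phifx !(linearZ_LR phih) phihz !scaler0.
by rewrite -2!scalerA -phifx -(linearZ_LR phif) t1x linear0.
Qed.

Lemma uS_abs_pure_dsum (M0 : lmodType R) (l : seq (lmodType R)) :
  uS_abs_pure S M0 -> (forall i, (i < size l)%N -> uS_abs_pure S (nth M0 l i)) ->
  uS_abs_pure S (dsum M0 l).
Proof.
elim: l M0 => [|M1 l IH] M0 AP0 APl //=.
have AP1 : uS_abs_pure S (dsum M1 l).
  apply: IH => [|i il]; first exact: (APl 0%N).
  by rewrite (set_nth_default M0 M1 il); apply: (APl i.+1).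
have inl_lin : is_lin (fun a : M0 => ((a, 0) : M0 * dsum M1 l)).
  by move=> k x y; congr (_, _); rewrite /= scaler0 addr0.
have snd_lin : is_lin (fun x : M0 * dsum M1 l => x.2) by [].
apply: (uS_abs_pure_ext (f := linmap inl_lin) (g := linmap snd_lin)) AP0 AP1.
exists 1; split; first exact: HS.1.
do !split.
- by move=> a [->]; rewrite scale1r.
- by move=> [a b] /= ->; exists a; rewrite scale1r.
- by move=> a; rewrite /= scaler0.
- by move=> c; exists (0, c); rewrite scale1r.
Qed.

End Closure.

Theorem proposition3p3 (R : comPzRingType) (S : R -> Prop) (HS : mult_subset S) :
  (* (1) *)
  (forall E : lmodType R, abs_pure E -> uS_abs_pure S E) /\
  (forall E : lmodType R, uS_injective S E -> uS_abs_pure S E) /\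
  (* (2) *)
  (forall (M0 : lmodType R) (l : seq (lmodType R)),
      uS_abs_pure S M0 -> (forall i, (i < size l)%N -> uS_abs_pure S (nth M0 l i)) ->
      uS_abs_pure S (dsum M0 l)) /\
  (* (3) *)
  (forall (A B C : lmodType R) (f : {linear A -> B}) (g : {linear B -> C}),
      uS_exact S f g -> uS_abs_pure S A -> uS_abs_pure S C -> uS_abs_pure S B) /\
  (* (4) *)
  (forall (A B : lmodType R) (f : {linear A -> B}),
      uS_iso S f -> uS_abs_pure S A -> uS_abs_pure S B) /\
  (* (5) *)
  (forall (A B C : lmodType R) (f : {linear A -> B}) (g : {linear B -> C}),
      uS_pure S f g -> uS_abs_pure S B -> uS_abs_pure S A).
Proof.
split; first exact: abs_pure_uS_abs_pure.
split; first exact: uS_injective_uS_abs_pure.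
split; first exact: uS_abs_pure_dsum.
split; first exact: uS_abs_pure_ext.
split; first exact: uS_abs_pure_uS_iso.
exact: uS_abs_pure_pure_sub.
Qed.
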